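(* Let $R\in\{\mathrm{ML},\mathrm{wML},\mathrm{C},\mathrm{S}\}$, let $p,q\in[0,1]$ be real numbers with $p<q$, let $I\in\mathscr I$ be an interval forecast with $I\subseteq(0,1)$, let $\mathscr S$ be a countable set of selection processes with $\mathscr S\supseteq\mathscr S^{p,q}_{\mathscr F_R}$, and let $\varpi\in\Omega$ be a path that is $\mathscr S$-random for $I$. Then a path $\omega\in\Omega$ is $R$-random for $\varphi^{\varpi}_{p,q}$ if and only if it is $R$-random for $[p,q]$.
   Context: Notation: $\mathbb N=\{1,2,\dots\}$, $\mathbb N_0=\mathbb N\cup\{0\}$. $\Omega=\{0,1\}^{\mathbb N}$ is the set of paths $\omega=(\omega_1,\omega_2,\dots)$; $\omega_{1:n}=(\omega_1,\dots,\omega_n)$ and $\omega_{1:0}=\square$ (the empty sequence). $\mathbb S=\bigcup_{n\in\mathbb N_0}\{0,1\}^n$ is the set of situations, $|s|$ the length of $s$, $sx$ the concatenation. $\mathscr I$ is the set of closed intervals $I\subseteq[0,1]$ (singletons $[r,r]$ are identified with $r$). For $r\in[0,1]$ and $f:\{0,1\}\to\mathbb R$, $E_r(f)=rf(1)+(1-r)f(0)$; for $I\in\mathscr I$, $\overline E_I(f)=\max_{r\in I}E_r(f)$. A forecasting system is a map $\varphi:\mathbb S\to\mathscr I$; $\underline\varphi(s)=\min\varphi(s)$, $\overline\varphi(s)=\max\varphi(s)$; a stationary (constant) forecasting system with value $I$ is identified with $I$. A real process is a map $F:\mathbb S\to\mathbb R$; $\Delta F(s)$ is the function $x\mapsto F(sx)-F(s)$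 on $\{0,1\}$. $M$ is a supermartingale for $\varphi$ if $\overline E_{\varphi(s)}(\Delta M(s))\le0$ for all $s\in\mathbb S$. A test process is a non-negative real process $F$ with $F(\square)=1$; a test supermartingale for $\varphi$ is a test process that is a supermartingale for $\varphi$. A multiplier process $D$ assigns to each $s\in\mathbb S$ a function $D(s):\{0,1\}\to[0,\infty)$; it generates the test process $F$ with $F(\square)=1$ and $F(sx)=F(s)D(s)(x)$. Computability: a map from a countable effectively encoded domain $\mathscr D$ (e.g. $\mathbb N_0$, $\mathbb S$, $\mathbb S\times\mathbb N_0$, $\mathbb S\times\{0,1\}\times\mathbb N_0$) to $\mathbb N_0$ or $\mathbb Q$ is recursive if it is computable by a Turing machine. A real map $r$ on $\mathscr D$ is lower semicomputable if there is a recursive rational map $q$ on $\mathscr D\times\mathbb N_0$ with $q(d,n)\le q(d,n+1)$ and $r(d)=\lim_n q(d,n)$ for all $d,n$; it is computable if there is a recursive rational $q$ with $|r(d)-q(d,n)|<2^{-n}$ for all $d,n$. A multiplier process is lower semicomputable if $(s,x)\mapsto D(s)(x)$ is. $\mathscr F_{\mathrm{ML}}$ is the set of lower semicomputable test processes, $\mathscr F_{\mathrm{wML}}$ the set of test processes generated by lower semicomputable multiplier processes, and $\mathscr F_{\mathrm C}=\mathscr F_{\mathrm S}$ the set of positive, rational-valued, recursive test processes. For $R\in\{\mathrm{ML},\mathrm{wML},\mathrm C,\mathrm S\}$, $\overline{\mathbb T}_R(\varphi)$ is the set of elements of $\mathscr F_R$ that are test supermartingales for $\varphi$. For $R\in\{\mathrm{ML},\mathrm{wML},\mathrm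 C\}$, a path $\omega$ is $R$-random for $\varphi$ if no $T\in\overline{\mathbb T}_R(\varphi)$ has $\limsup_{n\to\infty}T(\omega_{1:n})=\infty$. A real growth function is a computable, non-decreasing, unbounded map $\tau:\mathbb N_0\to[0,\infty)$; $\omega$ is S-random for $\varphi$ if there are no $T\in\overline{\mathbb T}_{\mathrm S}(\varphi)$ and real growth function $\tau$ with $\limsup_{n\to\infty}[T(\omega_{1:n})-\tau(n)]\ge0$. $R$-random for $I\in\mathscr I$ means $R$-random for the stationary forecasting system with value $I$. Selection processes: a selection process is a map $S:\mathbb S\to\{0,1\}$; it is temporal if $S(s)$ depends only on $|s|$ (written $S(n)$). For a countable set $\mathscr S$ of selection processes, a path $\omega$ is $\mathscr S$-random for $\varphi$ if for every $S\in\mathscr S$ with $\lim_{n}\sum_{k=0}^{n-1}S(\omega_{1:k})=\infty$ we have $\liminf_{n}\frac{\sum_{k=0}^{n-1}S(\omega_{1:k})[\omega_{k+1}-\underline\varphi(\omega_{1:k})]}{\sum_{k=0}^{n-1}S(\omega_{1:k})}\ge0$ and $\limsup_{n}\frac{\sum_{k=0}^{n-1}S(\omega_{1:k})[\omega_{k+1}-\overline\varphi(\omega_{1:k})]}{\sum_{k=0}^{n-1}S(\omega_{1:k})}\le0$. Special objects: for a real process $F$ and $r\in[0,1]$, $S^r_F$ is the temporal selection process with $S^r_F(n)=1$ if $E_r(\Delta F(s))>0$ for some $s$ with $|s|=n$, and $S^r_F(n)=0$ otherwise. For a countable set $\mathscr F$ of real processes, $\mathscr S^{p,q}_{\mathscr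 F}=\{S^r_F: F\in\mathscr F,\ r\in\{p,q\}\}$. For $p,q\in[0,1]$ and $\varpi\in\Omega$, $\varphi^\varpi_{p,q}$ is the precise forecasting system with $\varphi^\varpi_{p,q}(s)=p$ if $\varpi_{|s|+1}=0$ and $\varphi^\varpi_{p,q}(s)=q$ if $\varpi_{|s|+1}=1$. *)

From Stdlib Require Import Reals QArith Qreals List ClassicalEpsilon.
Import ListNotations.
Open Scope R_scope.

(* Computability: partial (mu-)recursive functions nat -> nat, in the *)
(* Kleene-style basis with Cantor pairing. Equivalent to Turing       *)
(* computability.                                                     *)

Definition cpair (a b : nat) : nat := ((a + b) * (a + b + 1) / 2 + b)%nat.

Inductive rcode : Type :=
| cZero : rcode
| cSucc : rcode
| cFst : rcode
| cSnd : rcode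
| cPair : rcode -> rcode -> rcode
| cComp : rcode -> rcode -> rcode
| cPrim : rcode -> rcode -> rcode
| cMu : rcode -> rcode.

Inductive reval : rcode -> nat -> nat -> Prop :=
| eZero x : reval cZero x 0
| eSucc x : reval cSucc x (S x)
| eFst a b : reval cFst (cpair a b) a
| eSnd a b : reval cSnd (cpair a b) b
| ePair f g x a b : reval f x a -> reval g x b -> reval (cPair f g) x (cpair a b)
| eComp f g x y z : reval g x y -> reval f y z -> reval (cComp f g) x z
| ePrim0 f g x y : reval f x y -> reval (cPrim f g) (cpair x 0) y
| ePrimS f g x n y z :
    reval (cPrim f g) (cpair x n) y -> reval g (cpair x (cpair n y)) z ->
    reval (cPrim f g) (cpair x (S n)) z
| eMu f x n :
    reval f (cpair x n) 0 ->
    (forall m, (m < n)%nat -> exists k, k <> 0%nat /\ reval f (cpair x m) k) ->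
    reval (cMu f) x n.

Definition recursive_nat (f : nat -> nat) : Prop :=
  exists c, forall x, reval c x (f x).

(* Situations: bijective base-2 numeration (digits 1,2). *)
Definition enc_sit (s : list bool) : nat :=
  fold_left (fun acc (b : bool) => (2 * acc + 1 + (if b then 1 else 0))%nat) s 0%nat.
Definition b2n (b : bool) : nat := if b then 1%nat else 0%nat.
Definition enc_sit_nat (sn : list bool * nat) : nat := cpair (enc_sit (fst sn)) (snd sn).
Definition enc_sx (sx : list bool * bool) : nat := cpair (enc_sit (fst sx)) (b2n (snd sx)).
Definition enc_sx_nat (sxn : (list bool * bool) * nat) : nat :=
  cpair (enc_sx (fst sxn)) (snd sxn).
Definition enc_nat_nat (mn : nat * nat) : nat := cpair (fst mn) (snd mn).

Definition recursive_map {D : Type} (enc : D -> nat) (f : D -> nat) : Prop :=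
  exists g, recursive_nat g /\ forall d, f d = g (enc d).

Definition recursive_Q {D : Type} (enc : D -> nat) (q : D -> Q) : Prop :=
  exists a b c : nat -> nat,
    recursive_nat a /\ recursive_nat b /\ recursive_nat c /\
    forall d, Qeq (q d)
      (Qmake (Z.of_nat (a (enc d)) - Z.of_nat (b (enc d)))%Z
             (Pos.of_succ_nat (c (enc d)))).

Definition lower_semicomputable {D : Type} (enc : D -> nat) (r : D -> R) : Prop :=
  exists q : D -> nat -> Q,
    recursive_Q (fun dn : D * nat => cpair (enc (fst dn)) (snd dn))
                (fun dn => q (fst dn) (snd dn)) /\
    (forall d n, Qle (q d n) (q d (S n))) /\
    (forall d, Un_cv (fun n => Q2R (q d n)) (r d)).

Definition computable_real {D : Type} (enc : D -> nat) (r : D -> R) : Prop :=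
  exists q : D -> nat -> Q,
    recursive_Q (fun dn : D * nat => cpair (enc (fst dn)) (snd dn))
                (fun dn => q (fst dn) (snd dn)) /\
    (forall d n, Rabs (r d - Q2R (q d n)) < / 2 ^ n).

(* A path omega = (omega_1, omega_2, ...) is represented by w : nat -> bool
   with omega_{k+1} = w k. *)
Definition path := nat -> bool.
Definition sit := list bool.

Definition prefix (w : path) (n : nat) : sit := map w (seq 0 n).

(* closed intervals [ilo, ihi]; singleton [r,r] identified with r *)
Record interval := mkI { ilo : R ; ihi : R }.
Definition is_interval (I : interval) : Prop :=
  0 <= ilo I /\ ilo I <= ihi I /\ ihi I <= 1.

Definition fsystem := sit -> interval.

Definition b2R (b : bool) : R := if b then 1 else 0.

Definition Ex (r : R) (f : bool -> R) : R := r * f true + (1 - r) * f false.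

Definition process := sit -> R.

Definition Delta (F : process) (s : sit) : bool -> R :=
  fun x => F (s ++ [x]) - F s.

(* upper expectation max_{r in I} E_r(f) <= 0, written out *)
Definition supermartingale (phi : fsystem) (M : process) : Prop :=
  forall s r, ilo (phi s) <= r <= ihi (phi s) -> Ex r (Delta M s) <= 0.

Definition test_process (F : process) : Prop :=
  (forall s, 0 <= F s) /\ F [] = 1.

Inductive rtype := rML | rwML | rC | rS.

Definition in_F (Rt : rtype) (F : process) : Prop :=
  match Rt with
  | rML => test_process F /\ lower_semicomputable enc_sit F
  | rwML => test_process F /\
      exists D : sit -> bool -> R,
        (forall s x, 0 <= D s x) /\
        lower_semicomputable enc_sx (fun sx => D (fst sx) (snd sx)) /\
        (forall s x, F (s ++ [x]) = F s * D s x)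
  | rC | rS => test_process F /\ (forall s, 0 < F s) /\
      exists q : sit -> Q, recursive_Q enc_sit q /\ forall s, F s = Q2R (q s)
  end.

Definition test_supermartingales (Rt : rtype) (phi : fsystem) (T : process) : Prop :=
  in_F Rt T /\ supermartingale phi T.

Definition growth_function (tau : nat -> R) : Prop :=
  computable_real (fun n : nat => n) tau /\
  (forall n, 0 <= tau n) /\
  (forall n m, (n <= m)%nat -> tau n <= tau m) /\
  (forall B, exists n, B < tau n).

Definition random (Rt : rtype) (phi : fsystem) (w : path) : Prop :=
  match Rt with
  | rS => ~ exists T tau,
      test_supermartingales rS phi T /\ growth_function tau /\
      (forall eps N, 0 < eps -> exists n, (N <= n)%nat /\ - eps < T (prefix w n) - tau n)
  | _ => ~ exists T,
      test_supermartingales Rt phi T /\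
      (forall B N, exists n, (N <= n)%nat /\ B < T (prefix w n))
  end.

Definition selection := sit -> bool.

Fixpoint rsum (f : nat -> R) (n : nat) : R :=
  match n with O => 0 | S k => rsum f k + f k end.

Definition countable_set (Ss : selection -> Prop) : Prop :=
  exists e : nat -> selection, forall Sl, Ss Sl -> exists n, e n = Sl.

Definition sel_random (Ss : selection -> Prop) (phi : fsystem) (w : path) : Prop :=
  forall Sl, Ss Sl ->
    let cnt := rsum (fun k => b2R (Sl (prefix w k))) in
    (forall B, exists N, forall n, (N <= n)%nat -> B < cnt n) ->
    (forall eps, 0 < eps -> exists N, forall n, (N <= n)%nat ->
        - eps < rsum (fun k => b2R (Sl (prefix w k)) *
                                 (b2R (w k) - ilo (phi (prefix w k)))) n / cnt n) /\
    (forall eps, 0 < eps -> exists N, forall n, (N <= n)%nat ->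
        rsum (fun k => b2R (Sl (prefix w k)) *
                         (b2R (w k) - ihi (phi (prefix w k)))) n / cnt n < eps).

Definition SrF (F : process) (r : R) : selection :=
  fun s => if excluded_middle_informative
                (exists s' : sit, length s' = length s /\ 0 < Ex r (Delta F s'))
           then true else false.

Definition Spq (Rt : rtype) (p q : R) (Sl : selection) : Prop :=
  exists F r, in_F Rt F /\ (r = p \/ r = q) /\ Sl = SrF F r.

Definition stationary (I : interval) : fsystem := fun _ => I.

Definition phi_pq (varpi : path) (p q : R) : fsystem :=
  fun s => if varpi (length s) then mkI q q else mkI p p.

(* If [T] is a test supermartingale for [phi_pq varpi p q], the temporal selections [S^p_T]
   and [S^q_T] only select times at which [varpi] forecasts [q], resp. [p].  As [varpi] is
   random for an interval [I] inside (0,1), selecting only ones (or only zeros) cannot go on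
   forever, so from some time on [E_p] and [E_q], hence every [E_r] with [r] in [[p,q]], are
   nonpositive on the increments of [T].  Restarting [T] at a long enough prefix of [omega]
   (constant 1 before it, [T] divided by a constant after it) gives a test supermartingale
   for [[p,q]] of the same computability class that blows up on [omega] with [T].  The
   converse direction holds because every forecast of [phi_pq varpi p q] lies in [[p,q]]. *)

From Pilot Require Import Defs.
From Stdlib Require Import Reals QArith Qreals List ClassicalEpsilon.
From Stdlib Require Import Lia Lra Classical.
Import ListNotations.
(* [Reals] also defines a [Delta]; the one meant here is [Defs.Delta]. *)
Import Pilot.Defs.

Local Open Scope nat_scope.

(** * Cantor pairing and recursive functions *)

Lemma cpair_double a b : 2 * cpair a b = (a + b) * (a + b + 1) + 2 * b.
Proof.
  unfold cpair.
  assert (Heven : exists t, (a + b) * (a + b + 1) = 2 * t).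
  { generalize (a + b) as n; induction n as [|n [t Ht]].
    - exists 0; lia.
    - exists (t + n + 1); lia. }
  destruct Heven as [t ->]. rewrite (Nat.mul_comm 2 t), Nat.div_mul by lia. lia.
Qed.

Lemma cpair_inj a b a' b' : cpair a b = cpair a' b' -> a = a' /\ b = b'.
Proof.
  intro E. pose proof (cpair_double a b). pose proof (cpair_double a' b').
  assert (Hsum : a + b = a' + b').
  { destruct (Nat.lt_total (a + b) (a' + b')) as [Hlt|[Heq|Hlt]]; [exfalso| |exfalso]; auto.
    - assert ((a + b + 1) * (a + b + 2) <= (a' + b') * (a' + b' + 1))
        by (apply Nat.mul_le_mono; lia). nia.
    - assert ((a' + b' + 1) * (a' + b' + 2) <= (a + b) * (a + b + 1))
        by (apply Nat.mul_le_mono; lia). nia. }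
  rewrite Hsum in *. lia.
Qed.

Lemma cpair_surjective x : exists ab : nat * nat, x = cpair (fst ab) (snd ab).
Proof.
  induction x as [|x [[a b] ->]]; [now exists (0, 0)|]. simpl.
  destruct a as [|a].
  - exists (S b, 0). pose proof (cpair_double 0 b). pose proof (cpair_double (S b) 0). simpl. nia.
  - exists (a, S b). pose proof (cpair_double (S a) b). pose proof (cpair_double a (S b)).
    simpl. replace (a + S b) with (S a + b) in * by lia. lia.
Qed.

Definition unpair (x : nat) : nat * nat :=
  proj1_sig (constructive_indefinite_description _ (cpair_surjective x)).

Lemma cpair_unpair x : x = cpair (fst (unpair x)) (snd (unpair x)).
Proof. exact (proj2_sig (constructive_indefinite_description _ (cpair_surjective x))). Qed.

Lemma unpair_cpair a b : unpair (cpair a b) = (a, b).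
Proof.
  destruct (cpair_inj _ _ _ _ (cpair_unpair (cpair a b))) as [Ha Hb].
  destruct (unpair (cpair a b)); simpl in *; congruence.
Qed.

Lemma recursive_ext f g : recursive_nat f -> (forall x, f x = g x) -> recursive_nat g.
Proof. intros [c Hc] E. exists c. intro x. rewrite <- E. apply Hc. Qed.

Lemma recursive_succ : recursive_nat S.
Proof. exists cSucc. constructor. Qed.

Lemma recursive_fst : recursive_nat (fun x => fst (unpair x)).
Proof. exists cFst. intro x. rewrite (cpair_unpair x) at 1. constructor. Qed.

Lemma recursive_snd : recursive_nat (fun x => snd (unpair x)).
Proof. exists cSnd. intro x. rewrite (cpair_unpair x) at 1. constructor. Qed.

Lemma recursive_pair f g :
  recursive_nat f -> recursive_nat g -> recursive_nat (fun x => cpair (f x) (g x)).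
Proof. intros [cf Hf] [cg Hg]. exists (cPair cf cg). constructor; auto. Qed.

Lemma recursive_comp f g :
  recursive_nat f -> recursive_nat g -> recursive_nat (fun x => f (g x)).
Proof. intros [cf Hf] [cg Hg]. exists (cComp cf cg). econstructor; eauto. Qed.

Fixpoint primrec (F G : nat -> nat) (x n : nat) : nat :=
  match n with
  | 0 => F x
  | S m => G (cpair x (cpair m (primrec F G x m)))
  end.

Lemma recursive_primrec F G f g :
  recursive_nat F -> recursive_nat G -> recursive_nat f -> recursive_nat g ->
  recursive_nat (fun x => primrec F G (f x) (g x)).
Proof.
  intros [cF HF] [cG HG] [cf Hf] [cg Hg].
  exists (cComp (cPrim cF cG) (cPair cf cg)). intro x. econstructor; [constructor; eauto|].
  induction (g x); simpl; econstructor; eauto.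
Qed.

Lemma recursive_id : recursive_nat (fun x => x).
Proof.
  eapply recursive_ext; [apply (recursive_pair _ _ recursive_fst recursive_snd)|].
  intro x. symmetry. apply cpair_unpair.
Qed.

Lemma recursive_const k : recursive_nat (fun _ => k).
Proof.
  induction k as [|k IH].
  - exists cZero. constructor.
  - exact (recursive_comp _ _ recursive_succ IH).
Qed.

Lemma recursive_fst_snd : recursive_nat (fun z => fst (unpair (snd (unpair z)))).
Proof. exact (recursive_comp _ _ recursive_fst recursive_snd). Qed.

Lemma recursive_snd_snd : recursive_nat (fun z => snd (unpair (snd (unpair z)))).
Proof. exact (recursive_comp _ _ recursive_snd recursive_snd). Qed.

Lemma recursive_pred : recursive_nat Nat.pred.
Proof.
  eapply recursive_ext.
  { apply (recursive_primrec (fun _ => 0) (fun z => fst (unpair (snd (unpair z))))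
      (fun _ => 0) (fun x => x));
    auto using recursive_const, recursive_id, recursive_fst_snd. }
  intros [|x]; simpl; [|repeat (rewrite unpair_cpair; simpl)]; reflexivity.
Qed.

Lemma recursive_add f g :
  recursive_nat f -> recursive_nat g -> recursive_nat (fun x => f x + g x).
Proof.
  intros Hf Hg. eapply recursive_ext.
  { apply (recursive_primrec (fun a => a) (fun z => S (snd (unpair (snd (unpair z))))) f g);
      auto using recursive_id.
    exact (recursive_comp _ _ recursive_succ recursive_snd_snd). }
  intro x. simpl. induction (g x) as [|n IH]; simpl; [lia|].
  repeat (rewrite unpair_cpair; simpl). lia.
Qed.

Lemma recursive_sub f g :
  recursive_nat f -> recursive_nat g -> recursive_nat (fun x => f x - g x).
Proof.
  intros Hf Hg. eapply recursive_ext.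
  { apply (recursive_primrec (fun a => a)
      (fun z => Nat.pred (snd (unpair (snd (unpair z))))) f g); auto using recursive_id.
    exact (recursive_comp _ _ recursive_pred recursive_snd_snd). }
  intro x. simpl. induction (g x) as [|n IH]; simpl; [lia|].
  repeat (rewrite unpair_cpair; simpl). lia.
Qed.

Lemma recursive_mul f g :
  recursive_nat f -> recursive_nat g -> recursive_nat (fun x => f x * g x).
Proof.
  intros Hf Hg. eapply recursive_ext.
  { apply (recursive_primrec (fun _ => 0)
      (fun z => snd (unpair (snd (unpair z))) + fst (unpair z)) f g);
      auto using recursive_const.
    apply recursive_add; [apply recursive_snd_snd | apply recursive_fst]. }
  intro x. simpl. induction (g x) as [|n IH]; simpl; [lia|].
  repeat (rewrite unpair_cpair; simpl). lia.
Qed.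

Lemma recursive_if_eqb f g a b :
  recursive_nat f -> recursive_nat g -> recursive_nat a -> recursive_nat b ->
  recursive_nat (fun x => if f x =? g x then a x else b x).
Proof.
  intros Hf Hg Ha Hb. eapply recursive_ext.
  { apply (recursive_primrec a (fun z => b (fst (unpair z))) (fun x => x)
      (fun x => f x - g x + (g x - f x))); auto using recursive_id.
    - exact (recursive_comp _ _ Hb recursive_fst).
    - apply recursive_add; apply recursive_sub; auto. }
  intro x. destruct (Nat.eqb_spec (f x) (g x)) as [E|E];
    destruct (f x - g x + (g x - f x)) eqn:D; simpl; try lia; auto.
  rewrite unpair_cpair. reflexivity.
Qed.

Lemma div2_succ n : Nat.div2 (S n) = n - Nat.div2 n.
Proof.
  enough (Nat.div2 n + Nat.div2 (S n) = n) by
    (set (a := Nat.div2 n) in *; set (b := Nat.div2 (S n)) in *; lia).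
  induction n as [|n IH]; [reflexivity|].
  change (Nat.div2 (S (S n))) with (S (Nat.div2 n)).
  set (a := Nat.div2 n) in *; set (b := Nat.div2 (S n)) in *; lia.
Qed.

Lemma recursive_div2 : recursive_nat Nat.div2.
Proof.
  eapply recursive_ext.
  { apply (recursive_primrec (fun _ => 0)
      (fun z => fst (unpair (snd (unpair z))) - snd (unpair (snd (unpair z))))
      (fun _ => 0) (fun x => x)); auto using recursive_const, recursive_id.
    apply recursive_sub; [apply recursive_fst_snd | apply recursive_snd_snd]. }
  intro x. induction x as [|x IH]; [reflexivity|]. cbn [primrec].
  repeat (rewrite unpair_cpair; cbn [fst snd]). rewrite IH, div2_succ. reflexivity.
Qed.

Lemma recursive_iter_self h :
  recursive_nat h -> recursive_nat (fun x => Nat.iter x h x).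
Proof.
  intro Hh. eapply recursive_ext.
  { apply (recursive_primrec (fun a => a) (fun z => h (snd (unpair (snd (unpair z)))))
      (fun x => x) (fun x => x)); auto using recursive_id.
    exact (recursive_comp _ _ Hh recursive_snd_snd). }
  intro x. cbv beta. generalize x at 2 3 as n. induction n as [|n IH]; simpl; [reflexivity|].
  repeat (rewrite unpair_cpair; simpl). congruence.
Qed.

(** * Deciding whether a situation extends another *)

Lemma enc_sit_snoc s b : enc_sit (s ++ [b]) = 2 * enc_sit s + 1 + b2n b.
Proof. unfold enc_sit. rewrite fold_left_app. destruct b; simpl; lia. Qed.

Lemma enc_sit_removelast s : Nat.div2 (Nat.pred (enc_sit s)) = enc_sit (removelast s).
Proof.
  destruct s as [|b s _] using rev_ind; [reflexivity|].
  rewrite removelast_last, enc_sit_snoc. destruct b; simpl b2n.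
  - replace (Nat.pred (2 * enc_sit s + 1 + 1)) with (S (2 * enc_sit s)) by lia.
    apply Nat.div2_succ_double.
  - replace (Nat.pred (2 * enc_sit s + 1 + 0)) with (2 * enc_sit s) by lia.
    apply Nat.div2_double.
Qed.

Lemma length_le_enc_sit s : length s <= enc_sit s.
Proof.
  induction s as [|b s IH] using rev_ind; [simpl; lia|].
  rewrite enc_sit_snoc, length_app. simpl. lia.
Qed.

Lemma enc_sit_inj s t : enc_sit s = enc_sit t -> s = t.
Proof.
  revert t. induction s as [|b s IH] using rev_ind;
    intros t E; destruct t as [|c t _] using rev_ind; auto;
    rewrite ?enc_sit_snoc in E; cbn [enc_sit fold_left] in E; try lia.
  assert (Hb : b = c) by (destruct b, c; simpl in E; auto; lia).
  subst c. f_equal. apply IH. destruct b; simpl in E; lia.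
Qed.

Definition extendsb (w0 s : sit) : bool :=
  if list_eq_dec Bool.bool_dec (firstn (length w0) s) w0 then true else false.

Lemma extendsbP w0 s : extendsb w0 s = true <-> exists t, s = w0 ++ t.
Proof.
  unfold extendsb. destruct (list_eq_dec _ _ _) as [E|E]; split; auto; try discriminate.
  - intros _. exists (skipn (length w0) s).
    rewrite <- (firstn_skipn (length w0) s) at 1. now rewrite E.
  - intros [t ->]. exfalso. apply E.
    rewrite firstn_app, Nat.sub_diag, firstn_all. apply app_nil_r.
Qed.

Lemma extendsb_snoc w0 s x :
  extendsb w0 (s ++ [x]) = true <-> extendsb w0 s = true \/ s ++ [x] = w0.
Proof.
  rewrite !extendsbP. split.
  - intros [t Ht]. destruct t as [|b t _] using rev_ind.
    + right. now rewrite app_nil_r in Ht.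
    + left. exists t. rewrite app_assoc in Ht. now apply app_inj_tail in Ht as [].
  - intros [[t ->] | <-].
    + exists (t ++ [x]). now rewrite app_assoc.
    + exists []. now rewrite app_nil_r.
Qed.

(** [Nat.div2 (Nat.pred y)] is the code of the parent situation ([enc_sit_removelast]) and
    [e0] is made a fixed point, so iterating from [enc_sit s] at least [length s] times ends
    in [e0] exactly when [s] extends the situation coded by [e0]. *)
Definition ancestor_step (e0 y : nat) : nat :=
  if y =? e0 then y else Nat.div2 (Nat.pred y).

Lemma iter_ancestor_step_prefix e0 n s :
  exists u v, s = u ++ v /\ Nat.iter n (ancestor_step e0) (enc_sit s) = enc_sit u.
Proof.
  revert s. induction n as [|n IH]; intro s.
  - exists s, []. now rewrite app_nil_r.
  - rewrite Nat.iter_succ_r. unfold ancestor_step at 2.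
    destruct (enc_sit s =? e0); [apply IH|].
    rewrite enc_sit_removelast. destruct (IH (removelast s)) as [u [v [Es Hu]]].
    destruct s as [|b s _] using rev_ind; [exists u, v; auto|].
    exists u, (v ++ [b]). rewrite removelast_last in Es, Hu |- *.
    split; [now rewrite Es, app_assoc | exact Hu].
Qed.

Lemma iter_ancestor_step_extends w0 t n :
  length t <= n -> Nat.iter n (ancestor_step (enc_sit w0)) (enc_sit (w0 ++ t)) = enc_sit w0.
Proof.
  revert t. induction n as [|n IH]; intros t Ht.
  - destruct t; simpl in Ht; [now rewrite app_nil_r | lia].
  - rewrite Nat.iter_succ_r. unfold ancestor_step at 2.
    destruct (Nat.eqb_spec (enc_sit (w0 ++ t)) (enc_sit w0)) as [E|E].
    + rewrite E. pose proof (IH [] (Nat.le_0_l n)) as H0. now rewrite app_nil_r in H0.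
    + destruct t as [|b t _] using rev_ind; [now rewrite app_nil_r in E|].
      rewrite enc_sit_removelast, app_assoc, removelast_last.
      apply IH. rewrite length_app in Ht. simpl in Ht. lia.
Qed.

Lemma recursive_map_extendsb w0 :
  recursive_map enc_sit (fun s => if extendsb w0 s then 0 else 1).
Proof.
  set (e0 := enc_sit w0).
  exists (fun x => if Nat.iter x (ancestor_step e0) x =? e0 then 0 else 1). split.
  - apply recursive_if_eqb; auto using recursive_const.
    apply recursive_iter_self. unfold ancestor_step.
    apply recursive_if_eqb; auto using recursive_id, recursive_const.
    exact (recursive_comp _ _ recursive_div2 recursive_pred).
  - intro s. enough (Hiff : extendsb w0 s = true <->
                      Nat.iter (enc_sit s) (ancestor_step e0) (enc_sit s) = e0).
    { destruct (extendsb w0 s), (Nat.eqb_spec (Nat.iter (enc_sit s) (ancestor_step e0)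
        (enc_sit s)) e0); intuition congruence. }
    rewrite extendsbP. split.
    + intros [t ->]. apply iter_ancestor_step_extends.
      pose proof (length_le_enc_sit (w0 ++ t)) as Hlen. rewrite length_app in Hlen. lia.
    + intro Hroot. destruct (iter_ancestor_step_prefix e0 (enc_sit s) s) as [u [v [Es Hu]]].
      rewrite Hu in Hroot. apply enc_sit_inj in Hroot. subst. eauto.
Qed.

(** * Recursive rationals and lower semicomputable reals *)

Lemma recursive_map_fst {D E : Type} (encD : D -> nat) (encE : E -> nat) (f : D -> nat) :
  recursive_map encD f ->
  recursive_map (fun de : D * E => cpair (encD (fst de)) (encE (snd de)))
                (fun de => f (fst de)).
Proof.
  intros [g [Hg Ef]]. exists (fun x => g (fst (unpair x))). split.
  - exact (recursive_comp _ _ Hg recursive_fst).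
  - intro de. now rewrite unpair_cpair, Ef.
Qed.

Lemma recursive_Q_one {D : Type} (enc : D -> nat) : recursive_Q enc (fun _ => 1%Q).
Proof.
  exists (fun _ => 1), (fun _ => 0), (fun _ => 0).
  repeat split; apply recursive_const.
Qed.

Lemma recursive_Q_scale {D : Type} (enc : D -> nat) (q : D -> Q) (k : nat) :
  recursive_Q enc q -> recursive_Q enc (fun d => q d * (1 # Pos.of_succ_nat k))%Q.
Proof.
  intros [a [b [c [Ha [Hb [Hc Eq]]]]]].
  exists a, b, (fun e => c e * S k + k). repeat split; auto.
  - apply recursive_add; [apply recursive_mul|]; auto using recursive_const.
  - intro d. rewrite (Eq d). unfold Qeq, Qmult; simpl.
    rewrite !Pos2Z.inj_mul, !Znat.Zpos_P_of_succ_nat, Znat.Nat2Z.inj_add, Znat.Nat2Z.inj_mul.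
    nia.
Qed.

Lemma recursive_Q_if {D : Type} (enc : D -> nat) (P : D -> bool) (q1 q2 : D -> Q) :
  recursive_map enc (fun d => if P d then 0 else 1) ->
  recursive_Q enc q1 -> recursive_Q enc q2 ->
  recursive_Q enc (fun d => if P d then q1 d else q2 d).
Proof.
  intros [t [Ht Et]] [a1 [b1 [c1 [Ha1 [Hb1 [Hc1 Eq1]]]]]]
    [a2 [b2 [c2 [Ha2 [Hb2 [Hc2 Eq2]]]]]].
  exists (fun e => if t e =? 0 then a1 e else a2 e),
    (fun e => if t e =? 0 then b1 e else b2 e),
    (fun e => if t e =? 0 then c1 e else c2 e).
  repeat split; try (apply recursive_if_eqb; auto using recursive_const).
  intro d. specialize (Et d). destruct (P d); rewrite <- Et; simpl; auto.
Qed.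

Open Scope R_scope.

Lemma Un_cv_const c : Un_cv (fun _ => c) c.
Proof.
  intros e He. exists 0%nat. intros n _. unfold Rdist. now rewrite Rminus_diag, Rabs_R0.
Qed.

Lemma Un_cv_ext u v l : (forall n, u n = v n) -> Un_cv u l -> Un_cv v l.
Proof.
  intros E H e He. destruct (H e He) as [N HN]. exists N. intros n Hn. rewrite <- E. auto.
Qed.

Lemma Q2R_inv_succ k : Q2R (1 # Pos.of_succ_nat k) = / INR (S k).
Proof.
  unfold Q2R. simpl Qnum. simpl Qden.
  rewrite Znat.Zpos_P_of_succ_nat, INR_IZR_INZ, Znat.Nat2Z.inj_succ. lra.
Qed.

Lemma INR_succ_pos k : 0 < INR (S k).
Proof. apply lt_0_INR. lia. Qed.

Lemma lower_semicomputable_one {D : Type} (enc : D -> nat) :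
  lower_semicomputable enc (fun _ => 1).
Proof.
  exists (fun _ _ => 1%Q). split; [|split].
  - apply recursive_Q_one.
  - intros _ _. apply Qle_refl.
  - intros _. eapply Un_cv_ext; [|apply Un_cv_const]. intro n. unfold Q2R; simpl; lra.
Qed.

Lemma lower_semicomputable_scale {D : Type} (enc : D -> nat) (F : D -> R) (k : nat) :
  lower_semicomputable enc F -> lower_semicomputable enc (fun d => F d / INR (S k)).
Proof.
  intros [q [Hq [Hmono Hcv]]].
  exists (fun d n => (q d n * (1 # Pos.of_succ_nat k))%Q). split; [|split].
  - exact (recursive_Q_scale _ (fun dn => q (fst dn) (snd dn)) k Hq).
  - intros d n. apply Qmult_le_compat_r; [apply Hmono | unfold Qle; simpl; lia].
  - intro d. eapply Un_cv_ext; [|exact (CV_mult _ _ _ _ (Hcv d) (Un_cv_const (/ INR (S k))))].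
    intro n. simpl. now rewrite Q2R_mult, Q2R_inv_succ.
Qed.

Lemma lower_semicomputable_if {D : Type} (enc : D -> nat) (P : D -> bool) (F G : D -> R) :
  recursive_map enc (fun d => if P d then 0%nat else 1%nat) ->
  lower_semicomputable enc F -> lower_semicomputable enc G ->
  lower_semicomputable enc (fun d => if P d then F d else G d).
Proof.
  intros HP [qF [HqF [HmF HcvF]]] [qG [HqG [HmG HcvG]]].
  exists (fun d n => if P d then qF d n else qG d n). split; [|split].
  - apply (recursive_Q_if _ (fun dn => P (fst dn)) (fun dn => qF (fst dn) (snd dn))
      (fun dn => qG (fst dn) (snd dn))); auto.
    exact (recursive_map_fst enc (fun n => n) _ HP).
  - intros d n. destruct (P d); auto.
  - intro d. destruct (P d); auto.
Qed.

(** * Restarting a test process *)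

Definition restart (T : process) (w0 : sit) (c : R) : process :=
  fun s => if extendsb w0 s then T s / c else 1.

Definition supermartingale_from (N : nat) (psi : fsystem) (T : process) : Prop :=
  forall s, (N <= length s)%nat ->
    forall r, ilo (psi s) <= r <= ihi (psi s) -> Ex r (Delta T s) <= 0.

Lemma Ex_nonpos r f : 0 <= r <= 1 -> f true <= 0 -> f false <= 0 -> Ex r f <= 0.
Proof. unfold Ex. intros Hr Ht Hf. nra. Qed.

Section Restart.

Variables (T : process) (w0 : sit) (c : R).
Hypothesis c_pos : 0 < c.

Let inv_c_pos : 0 < / c := Rinv_0_lt_compat c c_pos.

Lemma restart_test_process : (forall s, 0 <= T s) -> w0 <> [] -> test_process (restart T w0 c).
Proof.
  intros HT Hw. split.
  - intro s. unfold restart, Rdiv. destruct (extendsb w0 s); [|lra].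
    specialize (HT s). nra.
  - unfold restart. destruct (extendsb w0 []) eqn:E; auto.
    apply extendsbP in E as [t Et]. destruct w0; [contradiction | discriminate].
Qed.

(** Off the cone of [w0] the restarted process is constant, except for the single step
    into [w0] itself, where it moves from [1] to [T w0 / c <= 1]. *)
Lemma restart_supermartingale psi N :
  (forall s, 0 <= ilo (psi s) /\ ihi (psi s) <= 1) ->
  supermartingale_from N psi T -> (N <= length w0)%nat -> T w0 <= c ->
  supermartingale psi (restart T w0 c).
Proof.
  intros Hpsi HT HN Hw0 s r Hr. unfold Ex, Delta, restart.
  destruct (extendsb w0 s) eqn:Es.
  - rewrite !(proj2 (extendsb_snoc w0 s _) (or_introl Es)).
    assert (Hs : (N <= length s)%nat).
    { apply extendsbP in Es as [t ->]. rewrite length_app. lia. }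
    pose proof (HT s Hs r Hr) as HTs. unfold Ex, Delta, Rdiv in *. nra.
  - assert (Hstep : forall x, (if extendsb w0 (s ++ [x]) then T (s ++ [x]) / c else 1) - 1 <= 0).
    { intro x. destruct (extendsb w0 (s ++ [x])) eqn:Hext; [|lra].
      apply extendsb_snoc in Hext as [Hext | <-]; [congruence|].
      assert (c * / c = 1) by (apply Rinv_r; lra). unfold Rdiv. nra. }
    apply (Ex_nonpos r (fun x => _ - 1)); auto.
    specialize (Hpsi s). lra.
Qed.

End Restart.

Lemma restart_in_F_ML T w0 k :
  w0 <> [] -> in_F rML T -> in_F rML (restart T w0 (INR (S k))).
Proof.
  intros Hw [HT HT_lsc]. split.
  - apply restart_test_process; auto using INR_succ_pos. apply HT.
  - apply lower_semicomputable_if; auto using recursive_map_extendsb.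
    + apply lower_semicomputable_scale, HT_lsc.
    + apply lower_semicomputable_one.
Qed.

Lemma restart_in_F_C T w0 k :
  w0 <> [] -> in_F rC T -> in_F rC (restart T w0 (INR (S k))).
Proof.
  intros Hw [HT [HT_pos [q [Hq Eq]]]]. split; [|split].
  - apply restart_test_process; auto using INR_succ_pos. apply HT.
  - intro s. unfold restart. destruct (extendsb w0 s); [|lra].
    apply Rdiv_lt_0_compat; auto using INR_succ_pos.
  - exists (fun s => if extendsb w0 s then (q s * (1 # Pos.of_succ_nat k))%Q else 1%Q).
    split.
    + apply recursive_Q_if; auto using recursive_map_extendsb, recursive_Q_scale, recursive_Q_one.
    + intro s. unfold restart. destruct (extendsb w0 s).
      * now rewrite Q2R_mult, Q2R_inv_succ, <- Eq.
      * unfold Q2R; simpl; lra.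
Qed.

(** The multipliers of the restarted process are those of [T] on the cone of [w0] and [1]
    elsewhere: dividing by [T w0] itself makes the step into [w0] a multiplication by 1. *)
Lemma restart_in_F_wML T w0 :
  w0 <> [] -> 0 < T w0 -> in_F rwML T -> in_F rwML (restart T w0 (T w0)).
Proof.
  intros Hw Hpos [HT [D [HD [HD_lsc HTD]]]]. split.
  { apply restart_test_process; auto. apply HT. }
  exists (fun s x => if extendsb w0 s then D s x else 1). split; [|split].
  - intros s x. destruct (extendsb w0 s); auto; lra.
  - apply (lower_semicomputable_if _ (fun sx => extendsb w0 (fst sx))
      (fun sx => D (fst sx) (snd sx))); auto using lower_semicomputable_one.
    exact (recursive_map_fst enc_sit b2n _ (recursive_map_extendsb w0)).
  - intros s x. unfold restart. destruct (extendsb w0 s) eqn:Es.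
    + rewrite (proj2 (extendsb_snoc w0 s x) (or_introl Es)), HTD. unfold Rdiv. ring.
    + destruct (extendsb w0 (s ++ [x])) eqn:Esx; [|ring].
      apply extendsb_snoc in Esx as [Esx | ->]; [congruence|]. field. lra.
Qed.

Lemma growth_function_div tau k :
  growth_function tau -> growth_function (fun n => tau n / INR (S k)).
Proof.
  intros [[q [Hq Happrox]] [Hnonneg [Hmono Hunb]]].
  pose proof (INR_succ_pos k) as Hk.
  assert (Hinv : 0 < / INR (S k) <= 1).
  { split; [now apply Rinv_0_lt_compat|]. rewrite <- Rinv_1.
    apply Rinv_le_contravar; [lra|]. rewrite S_INR. pose proof (pos_INR k). lra. }
  unfold Rdiv. split; [|split; [|split]].
  - exists (fun n j => (q n j * (1 # Pos.of_succ_nat k))%Q). split.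
    + exact (recursive_Q_scale _ (fun dn => q (fst dn) (snd dn)) k Hq).
    + intros n j. rewrite Q2R_mult, Q2R_inv_succ, <- Rmult_minus_distr_r, Rabs_mult,
        (Rabs_right (/ INR (S k))) by lra.
      pose proof (Happrox n j). pose proof (Rabs_pos (tau n - Q2R (q n j))). nra.
  - intro n. specialize (Hnonneg n). nra.
  - intros n m Hnm. specialize (Hmono n m Hnm). nra.
  - intro B. destruct (Hunb (B * INR (S k))) as [n Hn]. exists n.
    apply (Rmult_lt_reg_r (INR (S k))); auto.
    rewrite Rmult_assoc, Rinv_l, Rmult_1_r; lra.
Qed.

Lemma length_prefix w n : length (prefix w n) = n.
Proof. unfold prefix. now rewrite length_map, length_seq. Qed.

Lemma prefix_nonnil w n : (0 < n)%nat -> prefix w n <> [].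
Proof.
  intros Hn E. apply (f_equal (@length bool)) in E. rewrite length_prefix in E. simpl in E. lia.
Qed.

Lemma restart_prefix T w m n c :
  (m <= n)%nat -> restart T (prefix w m) c (prefix w n) = T (prefix w n) / c.
Proof.
  intro Hmn. unfold restart. replace (extendsb (prefix w m) (prefix w n)) with true; [reflexivity|].
  symmetry. apply extendsbP. exists (map w (seq m (n - m))). unfold prefix.
  replace n with (m + (n - m))%nat at 1 by lia. now rewrite seq_app, map_app.
Qed.

Lemma restart_unbounded T w m c : 0 < c ->
  (forall B N, exists n, (N <= n)%nat /\ B < T (prefix w n)) ->
  forall B N, exists n, (N <= n)%nat /\ B < restart T (prefix w m) c (prefix w n).
Proof.
  intros Hc HT B N. destruct (HT (B * c) (max N m)) as [n [Hn HB]].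
  exists n. split; [lia|]. rewrite restart_prefix by lia.
  apply (Rmult_lt_reg_r c); auto. unfold Rdiv. rewrite Rmult_assoc, Rinv_l, Rmult_1_r; lra.
Qed.

Lemma restart_exceeds_growth T w m c tau : 0 < c ->
  (forall eps N, 0 < eps -> exists n, (N <= n)%nat /\ - eps < T (prefix w n) - tau n) ->
  forall eps N, 0 < eps ->
    exists n, (N <= n)%nat /\ - eps < restart T (prefix w m) c (prefix w n) - tau n / c.
Proof.
  intros Hc HT eps N Heps. destruct (HT (eps * c) (max N m)) as [n [Hn HB]]; [nra|].
  exists n. split; [lia|]. rewrite restart_prefix by lia.
  apply (Rmult_lt_reg_r c); auto. unfold Rdiv.
  rewrite Rmult_minus_distr_r, !Rmult_assoc, Rinv_l, !Rmult_1_r; lra.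
Qed.

Lemma restart_integer_supermartingale psi T w N :
  (forall s, 0 <= ilo (psi s) /\ ihi (psi s) <= 1) -> supermartingale_from N psi T ->
  exists k, supermartingale psi (restart T (prefix w (S N)) (INR (S k))).
Proof.
  intros Hpsi HT. destruct (INR_unbounded (T (prefix w (S N)))) as [k Hk]. exists k.
  apply (restart_supermartingale _ _ _ (INR_succ_pos k) psi N); auto.
  - rewrite length_prefix. lia.
  - rewrite S_INR. lra.
Qed.

(** A test that is a supermartingale for [psi] only from time [N] on is restarted along [w]
    after time [N]. *)
Lemma random_of_supermartingale_from Rt psi phi w :
  (forall s, 0 <= ilo (psi s) /\ ihi (psi s) <= 1) ->
  (forall T, in_F Rt T -> supermartingale phi T -> exists N, supermartingale_from N psi T) ->
  random Rt psi w -> random Rt phi w.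
Proof.
  intros Hpsi Htail. destruct Rt; unfold random; intros Hrand Hfail; apply Hrand.
  - destruct Hfail as [T [[HF HT] Hunb]]. destruct (Htail T HF HT) as [N HN].
    destruct (restart_integer_supermartingale psi T w N Hpsi HN) as [k Hk].
    exists (restart T (prefix w (S N)) (INR (S k))). split; [split|]; auto.
    + apply restart_in_F_ML, HF. apply prefix_nonnil. lia.
    + apply restart_unbounded; auto using INR_succ_pos.
  - destruct Hfail as [T [[HF HT] Hunb]]. destruct (Htail T HF HT) as [N HN].
    destruct (Hunb 0 (S N)) as [m [Hm Hpos]].
    exists (restart T (prefix w m) (T (prefix w m))). split; [split|].
    + apply restart_in_F_wML; auto. apply prefix_nonnil. lia.
    + apply (restart_supermartingale _ _ _ Hpos psi N); auto; [|lra].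
      rewrite length_prefix. lia.
    + apply restart_unbounded; auto.
  - destruct Hfail as [T [[HF HT] Hunb]]. destruct (Htail T HF HT) as [N HN].
    destruct (restart_integer_supermartingale psi T w N Hpsi HN) as [k Hk].
    exists (restart T (prefix w (S N)) (INR (S k))). split; [split|]; auto.
    + apply restart_in_F_C, HF. apply prefix_nonnil. lia.
    + apply restart_unbounded; auto using INR_succ_pos.
  - destruct Hfail as [T [tau [[HF HT] [Htau Hlim]]]]. destruct (Htail T HF HT) as [N HN].
    destruct (restart_integer_supermartingale psi T w N Hpsi HN) as [k Hk].
    exists (restart T (prefix w (S N)) (INR (S k))), (fun n => tau n / INR (S k)).
    split; [split|split]; auto.
    + apply (restart_in_F_C T _ k), HF. apply prefix_nonnil. lia.
    + apply growth_function_div, Htau.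
    + apply restart_exceeds_growth; auto using INR_succ_pos.
Qed.

Lemma random_antimono Rt psi phi w :
  (forall T, supermartingale psi T -> supermartingale phi T) ->
  random Rt phi w -> random Rt psi w.
Proof.
  intros Hincl. destruct Rt; unfold random; intros Hrand Hfail; apply Hrand.
  1-3: destruct Hfail as [T [[HF HT] Hunb]]; exists T; split; [split|]; auto.
  destruct Hfail as [T [tau [[HF HT] Hlim]]]. exists T, tau. split; [split|]; auto.
Qed.

(** * Selection and the forecasts of [phi_pq] *)

Lemma SrF_spec F r s :
  SrF F r s = true <-> exists s', length s' = length s /\ 0 < Ex r (Delta F s').
Proof. unfold SrF. destruct (excluded_middle_informative _); split; auto; easy. Qed.

Lemma SrF_false_Ex F r s0 s :
  SrF F r s0 = false -> length s = length s0 -> Ex r (Delta F s) <= 0.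
Proof.
  intros H0 Hs. apply Rnot_lt_le. intro Hpos.
  assert (SrF F r s0 = true) by (apply SrF_spec; eauto). congruence.
Qed.

Lemma rsum_selected (b : nat -> bool) (g : nat -> R) a n :
  (forall k, b k = true -> g k = a) ->
  rsum (fun k => b2R (b k) * g k) n = rsum (fun k => b2R (b k)) n * a.
Proof.
  intro Hg. induction n as [|n IH]; simpl; [ring|]. rewrite IH.
  destruct (b n) eqn:E; simpl; [rewrite (Hg n E)|]; ring.
Qed.

Lemma rsum_count_unbounded (b : nat -> bool) :
  (forall N, exists n, (N <= n)%nat /\ b n = true) ->
  forall B, exists N, forall n, (N <= n)%nat -> B < rsum (fun k => b2R (b k)) n.
Proof.
  intros Hinf.
  assert (Hmono : forall m n, (m <= n)%nat ->
            rsum (fun k => b2R (b k)) m <= rsum (fun k => b2R (b k)) n).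
  { intros m n Hmn. induction Hmn as [|n _ IH]; simpl; [lra|].
    destruct (b n); simpl; lra. }
  assert (Hreach : forall j, exists N, INR j <= rsum (fun k => b2R (b k)) N).
  { induction j as [|j [N HN]]; [exists 0%nat; simpl; lra|].
    destruct (Hinf N) as [n [Hn Hb]]. exists (S n).
    rewrite S_INR. simpl. rewrite Hb. simpl. specialize (Hmono N n Hn). lra. }
  intro B. destruct (INR_unbounded B) as [j Hj]. destruct (Hreach j) as [N HN].
  exists N. intros n Hn. specialize (Hmono N n Hn). lra.
Qed.

(** A selection that only picks outcomes equal to [val] has selected mean [b2R val], which lies
    outside [[ilo I, ihi I]] since [I] is inside [(0,1)]: it must stop selecting. *)
Lemma sel_random_selection_finite Ss I varpi Sl (val : bool) :
  sel_random Ss (stationary I) varpi -> Ss Sl -> 0 < ilo I -> ihi I < 1 ->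
  (forall k, Sl (prefix varpi k) = true -> varpi k = val) ->
  exists N, forall n, (N <= n)%nat -> Sl (prefix varpi n) = false.
Proof.
  intros Hsel HSl Hlo Hhi Hval. apply NNPP. intro Hfin.
  assert (Hinf : forall N, exists n, (N <= n)%nat /\ Sl (prefix varpi n) = true).
  { intro N. apply NNPP. intro Hnone. apply Hfin. exists N. intros n Hn.
    destruct (Sl (prefix varpi n)) eqn:E; auto. exfalso. eauto. }
  pose proof (rsum_count_unbounded _ Hinf) as Hcnt.
  destruct (Hsel Sl HSl Hcnt) as [Hliminf Hlimsup]. unfold stationary in *.
  destruct (Hcnt 0) as [N0 HN0].
  assert (Hmean : forall c n, (N0 <= n)%nat ->
    rsum (fun k => b2R (Sl (prefix varpi k)) * (b2R (varpi k) - c)) n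
      / rsum (fun k => b2R (Sl (prefix varpi k))) n = b2R val - c).
  { intros c n Hn. specialize (HN0 n Hn).
    rewrite (rsum_selected _ _ (b2R val - c)); [field; lra|].
    intros k Hk. now rewrite (Hval k Hk). }
  destruct val; simpl in Hmean.
  - destruct (Hlimsup (1 - ihi I)) as [N1 HN1]; [lra|].
    specialize (HN1 (max N0 N1) ltac:(lia)). rewrite Hmean in HN1 by lia. lra.
  - destruct (Hliminf (ilo I)) as [N1 HN1]; [lra|].
    specialize (HN1 (max N0 N1) ltac:(lia)). rewrite Hmean in HN1 by lia. lra.
Qed.

Lemma Ex_between p q r f : Ex p f <= 0 -> Ex q f <= 0 -> p <= r <= q -> Ex r f <= 0.
Proof. unfold Ex. intros Hp Hq Hr. destruct (Rle_dec 0 (f true - f false)); nra. Qed.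

(** [S^p_T] can only select times at which [varpi] forecasts [q], and [S^q_T] only times at
    which it forecasts [p]; so both eventually stop selecting. *)
Lemma phi_pq_supermartingale_from Rt p q I Ss varpi T :
  0 < ilo I -> ihi I < 1 -> (forall Sl, Spq Rt p q Sl -> Ss Sl) ->
  sel_random Ss (stationary I) varpi ->
  in_F Rt T -> supermartingale (phi_pq varpi p q) T ->
  exists N, supermartingale_from N (stationary (mkI p q)) T.
Proof.
  intros Hlo Hhi HSS Hsel HF HT.
  assert (Hfinite : forall r val, (r = p \/ r = q) ->
            (forall s, varpi (length s) <> val -> Ex r (Delta T s) <= 0) ->
            exists N, forall n, (N <= n)%nat -> SrF T r (prefix varpi n) = false).
  { intros r val Hr Hforecast. apply (sel_random_selection_finite Ss I varpi _ val); auto.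
    - apply HSS. now exists T, r.
    - intros k Hk. apply SrF_spec in Hk as [s [Hs Hpos]]. rewrite length_prefix in Hs.
      destruct (Bool.bool_dec (varpi k) val) as [|Hne]; auto.
      subst k. specialize (Hforecast s Hne). lra. }
  destruct (Hfinite p true) as [Np HNp]; auto.
  { intros s Hs. apply HT. unfold phi_pq. destruct (varpi (length s)); [easy|simpl; lra]. }
  destruct (Hfinite q false) as [Nq HNq]; auto.
  { intros s Hs. apply HT. unfold phi_pq. destruct (varpi (length s)); [simpl; lra|easy]. }
  exists (max Np Nq). intros s Hs r Hr. simpl in Hr.
  apply (Ex_between p q); auto;
    [apply (SrF_false_Ex T p (prefix varpi (length s))); [apply HNp | ]
    |apply (SrF_false_Ex T q (prefix varpi (length s))); [apply HNq | ]];
    rewrite ?length_prefix; lia.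
Qed.

Theorem theorem29 (Rt : rtype) (p q : R) (I : interval)
  (Ss : selection -> Prop) (varpi : path) :
  0 <= p -> p < q -> q <= 1 ->
  0 < ilo I -> ilo I <= ihi I -> ihi I < 1 ->
  countable_set Ss ->
  (forall Sl, Spq Rt p q Sl -> Ss Sl) ->
  sel_random Ss (stationary I) varpi ->
  forall omega : path,
    random Rt (phi_pq varpi p q) omega <-> random Rt (stationary (mkI p q)) omega.
Proof.
  (* Countability of [Ss] only matters for the existence of such a [varpi]. *)
  intros Hp Hpq Hq Hlo _ Hhi _ HSS Hsel omega. split.
  - apply random_antimono. intros T HT s r Hr. apply HT. simpl.
    unfold phi_pq in Hr. destruct (varpi (length s)); simpl in Hr; lra.
  - apply random_of_supermartingale_from.
    + intro s. simpl. lra.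
    + intros T HF HT. eapply phi_pq_supermartingale_from; eauto.
Qed.
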